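(* Fix $0<\alpha<1/2$. Consider the random binary tree generated by the following process: start from a single root node of depth $0$; each node $\Omega$ of depth $d(\Omega)$ is split into two children independently with probability $p_{split}(\Omega)=\alpha^{d(\Omega)}$, and otherwise becomes a leaf. Let $K$ be the number of leaves of the resulting tree. Then there exist constants $C>0$ and $C_K>0$ such that for all integers $k\ge 2$, $$\mathbb{P}(K>k)\le C\, e^{-C_K\, k\log k}.$$
   Context: $K=(X+1)/2$, where $X$ is the total number of nodes of the tree. *)

From Stdlib Require Import Reals List.
Import ListNotations.
Open Scope R_scope.

Inductive btree : Type :=
| Leaf : btree
| Node : btree -> btree -> btree.

Fixpoint leaves (t : btree) : nat :=
  match t with
  | Leaf => 1%nat
  | Node l r => (leaves l + leaves r)%nat
  end.

(** Probability that the splitting process started from a node of depth [d]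
    produces exactly the (finite) tree [t]: a node of depth d splits with
    probability alpha^d, independently, otherwise it is a leaf. *)
Fixpoint tree_prob (alpha : R) (d : nat) (t : btree) : R :=
  match t with
  | Leaf => 1 - alpha ^ d
  | Node l r => alpha ^ d * tree_prob alpha (S d) l * tree_prob alpha (S d) r
  end.

(** All binary trees with exactly [n] leaves (each listed once);
    [fuel] bounds the recursion and [fuel = n] suffices. *)
Fixpoint trees_fuel (fuel n : nat) : list btree :=
  match fuel with
  | O => []
  | S f =>
      match n with
      | O => []
      | S O => [Leaf]
      | _ =>
          flat_map (fun i =>
            flat_map (fun l => map (fun r => Node l r) (trees_fuel f (n - i)))
                     (trees_fuel f i))
            (seq 1 (n - 1))
      end
  end.

Definition trees_with_leaves (n : nat) : list btree := trees_fuel n n.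

Definition sumR (l : list R) : R := fold_right Rplus 0 l.

Definition prob_K_le (alpha : R) (k : nat) : R :=
  sumR (map (fun j => sumR (map (tree_prob alpha 0) (trees_with_leaves j)))
            (seq 1 k)).

(** P(K > k) = 1 - P(K <= k) (this also counts the null event of an infinite tree). *)
Definition prob_K_gt (alpha : R) (k : nat) : R := 1 - prob_K_le alpha k.

(* Let K_d be the number of leaves of the process started at a node of depth d, and fix
   lam >= 1.  Conditioning on the first split, the truncated moments
   E[lam^(min K_d (n+1))] satisfy  M_d(n+1) <= (1 - a^d) lam + a^d M_(d+1)(n)^2,
   because the leaf count of a split node is the sum of two independent copies of
   K_(d+1).  Once a^d * 4 lam <= 1 the squaring costs nothing, so by induction
   M_0 <= (2 lam)^(2^D).  Markov's inequality then bounds P(K > k) by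
   (2 lam)^(2^D) lam^-(k+1); taking 2^D about k/4 and lam = a^-D / 4, which is at
   least k^(1/6) because a < 1/2, gives exp(-k ln k / 12). *)

From Stdlib Require Import Reals Lra Lia Psatz List.
Import ListNotations.
Open Scope R_scope.

Lemma sumR_app l1 l2 : sumR (l1 ++ l2) = sumR l1 + sumR l2.
Proof. induction l1; simpl; [ring | rewrite IHl1; ring]. Qed.

Lemma sumR_map_scal {A} c (f : A -> R) l :
  sumR (map (fun x => c * f x) l) = c * sumR (map f l).
Proof. induction l; simpl; [ring | rewrite IHl; ring]. Qed.

Lemma sumR_map_plus {A} (f g : A -> R) l :
  sumR (map (fun x => f x + g x) l) = sumR (map f l) + sumR (map g l).
Proof. induction l; simpl; [ring | rewrite IHl; ring]. Qed.

Lemma sumR_map_single {A} (f : A -> R) x : sumR (map f [x]) = f x.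
Proof. simpl; ring. Qed.

Lemma sumR_map_ext {A} (f g : A -> R) l :
  (forall x, In x l -> f x = g x) -> sumR (map f l) = sumR (map g l).
Proof. intros H; f_equal; apply map_ext_in; auto. Qed.

Lemma sumR_map_le {A} (f g : A -> R) l :
  (forall x, In x l -> f x <= g x) -> sumR (map f l) <= sumR (map g l).
Proof.
  induction l as [|x l IH]; simpl; intros H; [lra|].
  assert (f x <= g x) by auto. assert (sumR (map f l) <= sumR (map g l)) by auto. lra.
Qed.

Lemma sumR_map_nonneg {A} (f : A -> R) l :
  (forall x, In x l -> 0 <= f x) -> 0 <= sumR (map f l).
Proof.
  induction l as [|x l IH]; simpl; intros H; [lra|].
  assert (0 <= f x) by auto. assert (0 <= sumR (map f l)) by auto. lra.
Qed.

Lemma sumR_flat_map {A B} (f : B -> R) (g : A -> list B) l :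
  sumR (map f (flat_map g l)) = sumR (map (fun x => sumR (map f (g x))) l).
Proof. induction l; simpl; [reflexivity | rewrite map_app, sumR_app, IHl; reflexivity]. Qed.

Lemma pow_le_1 a n : 0 <= a <= 1 -> a ^ n <= 1.
Proof. intros Ha. rewrite <- (pow1 n). apply pow_incr; exact Ha. Qed.

Lemma pow_le_pow_of_le_1 a m n : 0 <= a <= 1 -> (m <= n)%nat -> a ^ n <= a ^ m.
Proof.
  intros Ha Hmn. replace n with (m + (n - m))%nat by lia. rewrite pow_add.
  pose proof (pow_le_1 a (n - m) Ha). pose proof (pow_le a m (proj1 Ha)). nra.
Qed.

Lemma exp_le x y : x <= y -> exp x <= exp y.
Proof. intros [H | ->]; [left; apply exp_increasing; exact H | lra]. Qed.

Lemma trees_fuel_SS f n :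
  trees_fuel (S f) (S (S n)) =
  flat_map (fun i => flat_map (fun l => map (Node l) (trees_fuel f (S (S n) - i)))
                              (trees_fuel f i))
           (seq 1 (S n)).
Proof. reflexivity. Qed.

Lemma trees_fuel_S f n : (n <= f)%nat -> trees_fuel (S f) n = trees_fuel f n.
Proof.
  revert n; induction f as [|f IH]; intros n Hn.
  - replace n with 0%nat by lia; reflexivity.
  - destruct n as [|[|n]]; try reflexivity.
    rewrite !trees_fuel_SS, !flat_map_concat_map. f_equal.
    apply map_ext_in. intros i Hi. apply in_seq in Hi.
    rewrite (IH i), (IH (S (S n) - i)%nat) by lia. reflexivity.
Qed.

Lemma trees_fuel_enough f n : (n <= f)%nat -> trees_fuel f n = trees_with_leaves n.
Proof.
  induction f as [|f IH]; intros Hn.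
  - replace n with 0%nat by lia; reflexivity.
  - destruct (Nat.eq_dec n (S f)) as [-> | Hne]; [reflexivity|].
    rewrite trees_fuel_S by lia. apply IH; lia.
Qed.

Definition leaves_pmf (a : R) (d n : nat) : R :=
  sumR (map (tree_prob a d) (trees_with_leaves n)).

Lemma leaves_pmf_1 a d : leaves_pmf a d 1 = 1 - a ^ d.
Proof. unfold leaves_pmf, trees_with_leaves; simpl; ring. Qed.

Lemma leaves_pmf_split a d n : (2 <= n)%nat ->
  leaves_pmf a d n =
  a ^ d * sumR (map (fun i => leaves_pmf a (S d) i * leaves_pmf a (S d) (n - i))
                    (seq 1 (n - 1))).
Proof.
  intros Hn. destruct n as [|[|m]]; try lia.
  unfold leaves_pmf, trees_with_leaves. rewrite trees_fuel_SS.
  rewrite sumR_flat_map, <- sumR_map_scal. apply sumR_map_ext. intros i Hi. apply in_seq in Hi.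
  rewrite sumR_flat_map, !trees_fuel_enough by lia.
  set (p := tree_prob a (S d)).
  transitivity (sumR (map (fun l => (a ^ d * sumR (map p (trees_with_leaves (S (S m) - i))))
                                    * p l) (trees_with_leaves i))).
  - apply sumR_map_ext. intros l _. rewrite map_map. cbn [tree_prob]. fold p.
    rewrite (sumR_map_scal (a ^ d * p l)). ring.
  - rewrite sumR_map_scal. ring.
Qed.

Lemma tree_prob_nonneg a d t : 0 <= a <= 1 -> 0 <= tree_prob a d t.
Proof.
  intros Ha. revert d; induction t as [|l IHl r IHr]; intros d; simpl.
  - pose proof (pow_le_1 a d Ha). lra.
  - pose proof (pow_le a d (proj1 Ha)). pose proof (IHl (S d)). pose proof (IHr (S d)).
    apply Rmult_le_pos; [apply Rmult_le_pos|]; assumption.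
Qed.

Lemma leaves_pmf_nonneg a d n : 0 <= a <= 1 -> 0 <= leaves_pmf a d n.
Proof. intros Ha. apply sumR_map_nonneg. intros t _. apply tree_prob_nonneg, Ha. Qed.

Definition conv_sum (s w : nat -> R) (m : nat) : R :=
  sumR (map (fun i => sumR (map (fun j => s i * s j * w (i + j)%nat) (seq 1 (S m - i))))
            (seq 1 m)).

Definition corner_sum (s w : nat -> R) (m : nat) : R :=
  sumR (map (fun i => sumR (map (fun j => s i * s j * w (i + j)%nat)
                                (seq (S (S m - i)) (pred i))))
            (seq 1 m)).

Lemma sum_antidiagonals (h : nat -> nat -> R) m :
  sumR (map (fun n => sumR (map (fun i => h i (n - i)%nat) (seq 1 (n - 1)))) (seq 2 m)) =
  sumR (map (fun i => sumR (map (fun j => h i j) (seq 1 (S m - i)))) (seq 1 m)).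
Proof.
  induction m as [|m IH]; [reflexivity|].
  rewrite (seq_S m 2), map_app, sumR_app, IH, sumR_map_single.
  rewrite (seq_S m 1), map_app, sumR_app, sumR_map_single.
  replace (2 + m - 1)%nat with (S m) by lia.
  replace (S (S m) - (1 + m))%nat with 1%nat by lia.
  rewrite (seq_S m 1), map_app, sumR_app, sumR_map_single.
  replace (2 + m - (1 + m))%nat with 1%nat by lia.
  assert (E : sumR (map (fun i => sumR (map (fun j => h i j) (seq 1 (S (S m) - i)))) (seq 1 m)) =
              sumR (map (fun i => sumR (map (fun j => h i j) (seq 1 (S m - i)))) (seq 1 m)) +
              sumR (map (fun i => h i (2 + m - i)%nat) (seq 1 m))).
  { rewrite <- sumR_map_plus. apply sumR_map_ext. intros i Hi. apply in_seq in Hi.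
    replace (S (S m) - i)%nat with (S (S m - i)) by lia.
    rewrite seq_S, map_app, sumR_app, sumR_map_single.
    replace (1 + (S m - i))%nat with (2 + m - i)%nat by lia. reflexivity. }
  rewrite E. simpl (seq 1 1). rewrite sumR_map_single. ring.
Qed.

Lemma square_split s w m :
  sumR (map (fun i => sumR (map (fun j => s i * s j * w (i + j)%nat) (seq 1 m))) (seq 1 m)) =
  conv_sum s w m + corner_sum s w m.
Proof.
  unfold conv_sum, corner_sum. rewrite <- sumR_map_plus.
  apply sumR_map_ext. intros i Hi. apply in_seq in Hi.
  replace (seq 1 m) with (seq 1 (S m - i + pred i)) by (f_equal; lia).
  rewrite seq_app, map_app, sumR_app. reflexivity.
Qed.

Lemma square_mul s (w : nat -> R) l : (forall i j, w (i + j)%nat = w i * w j) ->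
  sumR (map (fun i => sumR (map (fun j => s i * s j * w (i + j)%nat) l)) l) =
  sumR (map (fun i => s i * w i) l) ^ 2.
Proof.
  intros Hw. cbn [pow]. rewrite Rmult_1_r, <- sumR_map_scal.
  apply sumR_map_ext. intros i _. rewrite Rmult_comm, <- sumR_map_scal.
  apply sumR_map_ext. intros j _. rewrite Hw. ring.
Qed.

Lemma corner_sum_scal_le s v w c m : (forall i, 0 <= s i) ->
  (forall n, (S m < n)%nat -> c * v n <= w n) ->
  c * corner_sum s v m <= corner_sum s w m.
Proof.
  intros Hs Hvw. unfold corner_sum. rewrite <- sumR_map_scal.
  apply sumR_map_le. intros i Hi. apply in_seq in Hi. rewrite <- sumR_map_scal.
  apply sumR_map_le. intros j Hj. apply in_seq in Hj.
  assert (0 <= s i * s j) by (apply Rmult_le_pos; auto).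
  assert (c * v (i + j)%nat <= w (i + j)%nat) by (apply Hvw; lia). nra.
Qed.

Lemma corner_sum_nonneg s w m : (forall i, 0 <= s i) ->
  (forall n, (S m < n)%nat -> 0 <= w n) -> 0 <= corner_sum s w m.
Proof.
  intros Hs Hw. rewrite <- (Rmult_0_l (corner_sum s w m)).
  apply corner_sum_scal_le; [exact Hs|]. intros n Hn. rewrite Rmult_0_l. auto.
Qed.

Lemma conv_sum_one_le s m : (forall i, 0 <= s i) ->
  conv_sum s (fun _ => 1) m <= sumR (map (fun j => s j * 1) (seq 1 m)) ^ 2.
Proof.
  intros Hs. rewrite <- (square_mul s (fun _ => 1)), (square_split s (fun _ => 1))
    by (intros; ring).
  pose proof (corner_sum_nonneg s (fun _ => 1) m Hs ltac:(intros; lra)). lra.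
Qed.

(* The terms of the square missing from the triangle have i + j >= m + 2. *)
Lemma conv_sum_pow_le s lam m : (forall i, 0 <= s i) -> 1 <= lam ->
  conv_sum s (pow lam) m - lam ^ S (S m) * conv_sum s (fun _ => 1) m <=
  sumR (map (fun j => s j * lam ^ j) (seq 1 m)) ^ 2
  - lam ^ S (S m) * sumR (map (fun j => s j * 1) (seq 1 m)) ^ 2.
Proof.
  intros Hs Hlam.
  rewrite <- (square_mul s (pow lam)) by (intros; apply pow_add).
  rewrite <- (square_mul s (fun _ => 1)) by (intros; ring).
  rewrite (square_split s (pow lam)), (square_split s (fun _ => 1)).
  assert (lam ^ S (S m) * corner_sum s (fun _ => 1) m <= corner_sum s (pow lam) m).
  { apply corner_sum_scal_le; [exact Hs|]. intros n Hn.
    rewrite Rmult_1_r. apply Rle_pow; [exact Hlam | lia]. }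
  lra.
Qed.

Definition partial_expect (a : R) (d : nat) (w : nat -> R) (n : nat) : R :=
  sumR (map (fun j => leaves_pmf a d j * w j) (seq 1 n)).

Definition leaves_cdf (a : R) (d n : nat) : R := partial_expect a d (fun _ => 1) n.

(* E[lam ^ min K (n + 1)]: the mass of K > n is weighted by lam ^ (n + 1). *)
Definition trunc_mgf (a lam : R) (d n : nat) : R :=
  partial_expect a d (pow lam) n + lam ^ S n * (1 - leaves_cdf a d n).

Lemma partial_expect_S a d w m :
  partial_expect a d w (S m) =
  (1 - a ^ d) * w 1%nat + a ^ d * conv_sum (leaves_pmf a (S d)) w m.
Proof.
  unfold partial_expect, conv_sum. change (seq 1 (S m)) with (1%nat :: seq 2 m).
  cbn [map sumR fold_right]. fold (sumR (map (fun j => leaves_pmf a d j * w j) (seq 2 m))).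
  rewrite leaves_pmf_1. f_equal.
  rewrite <- (sum_antidiagonals
                (fun i j => leaves_pmf a (S d) i * leaves_pmf a (S d) j * w (i + j)%nat)).
  rewrite <- sumR_map_scal. apply sumR_map_ext. intros n Hn. apply in_seq in Hn.
  rewrite leaves_pmf_split by lia. rewrite Rmult_assoc. f_equal.
  rewrite Rmult_comm, <- sumR_map_scal. apply sumR_map_ext. intros i Hi. apply in_seq in Hi.
  replace (i + (n - i))%nat with n by lia. ring.
Qed.

Lemma partial_expect_nonneg a d w n : 0 <= a <= 1 -> (forall j, 0 <= w j) ->
  0 <= partial_expect a d w n.
Proof.
  intros Ha Hw. apply sumR_map_nonneg. intros j _.
  apply Rmult_le_pos; [apply leaves_pmf_nonneg, Ha | apply Hw].
Qed.

Lemma leaves_cdf_le_1 a d n : 0 <= a <= 1 -> leaves_cdf a d n <= 1.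
Proof.
  intros Ha. revert d; induction n as [|m IH]; intros d.
  - unfold leaves_cdf, partial_expect; simpl; lra.
  - unfold leaves_cdf. rewrite partial_expect_S.
    pose proof (IH (S d)) as HF.
    pose proof (partial_expect_nonneg a (S d) (fun _ => 1) m Ha ltac:(intros; lra)) as HF0.
    assert (HC : conv_sum (leaves_pmf a (S d)) (fun _ => 1) m <= leaves_cdf a (S d) m ^ 2)
      by (apply conv_sum_one_le; intros; apply leaves_pmf_nonneg, Ha).
    fold (leaves_cdf a (S d) m) in HF0.
    pose proof (pow_le a d (proj1 Ha)). pose proof (pow_le_1 a d Ha).
    assert (leaves_cdf a (S d) m ^ 2 <= 1) by (simpl; nra). nra.
Qed.

Lemma trunc_mgf_nonneg a lam d n : 0 <= a <= 1 -> 0 <= lam -> 0 <= trunc_mgf a lam d n.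
Proof.
  intros Ha Hlam. unfold trunc_mgf.
  pose proof (partial_expect_nonneg a d (pow lam) n Ha (fun j => pow_le lam j Hlam)).
  pose proof (leaves_cdf_le_1 a d n Ha). pose proof (pow_le lam (S n) Hlam). nra.
Qed.

Lemma trunc_mgf_S_le a lam d m : 0 <= a <= 1 -> 1 <= lam ->
  trunc_mgf a lam d (S m) <= (1 - a ^ d) * lam + a ^ d * trunc_mgf a lam (S d) m ^ 2.
Proof.
  intros Ha Hlam. unfold trunc_mgf at 1, leaves_cdf. rewrite !partial_expect_S.
  set (s := leaves_pmf a (S d)).
  assert (Hs : forall i, 0 <= s i) by (intros; apply leaves_pmf_nonneg, Ha).
  set (F := leaves_cdf a (S d) m). set (M := partial_expect a (S d) (pow lam) m).
  set (P := lam ^ S m).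
  assert (HC1 : conv_sum s (fun _ => 1) m <= F ^ 2) by (apply conv_sum_one_le, Hs).
  assert (HCl : conv_sum s (pow lam) m - lam * P * conv_sum s (fun _ => 1) m
                <= M ^ 2 - lam * P * F ^ 2) by (apply conv_sum_pow_le; assumption).
  assert (HF1 : F <= 1) by (apply leaves_cdf_le_1, Ha).
  assert (HF0 : 0 <= F) by (apply partial_expect_nonneg; [exact Ha | intros; lra]).
  assert (HM : lam * F <= M).
  { unfold F, M, leaves_cdf, partial_expect. rewrite <- sumR_map_scal.
    apply sumR_map_le. intros j Hj. apply in_seq in Hj. fold s.
    assert (lam ^ 1 <= lam ^ j) by (apply Rle_pow; [exact Hlam | lia]).
    pose proof (Hs j). rewrite pow_1 in *. nra. }
  assert (HP : lam <= P) by (rewrite <- (pow_1 lam) at 1; apply Rle_pow; [exact Hlam | lia]).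
  assert (Key : conv_sum s (pow lam) m + lam * P * (1 - conv_sum s (fun _ => 1) m)
                <= (M + P * (1 - F)) ^ 2).
  { assert (0 <= (M - lam * F) * P * (1 - F)) by (apply Rmult_le_pos; [apply Rmult_le_pos|]; lra).
    assert (0 <= (1 - F) ^ 2 * P * (P - lam))
      by (apply Rmult_le_pos; [apply Rmult_le_pos; [apply pow2_ge_0|]|]; lra).
    simpl in *. nra. }
  pose proof (pow_le a d (proj1 Ha)).
  assert (a ^ d * (conv_sum s (pow lam) m + lam * P * (1 - conv_sum s (fun _ => 1) m))
          <= a ^ d * (M + P * (1 - F)) ^ 2) by (apply Rmult_le_compat_l; assumption).
  unfold trunc_mgf. fold M F P. change (lam ^ S (S m)) with (lam * P). simpl pow at 1. nra.
Qed.

Definition mgf_bound (lam : R) (D d : nat) : R := (2 * lam) ^ (2 ^ (D - d)).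

Lemma mgf_bound_ge lam D d : 1 <= lam -> 2 * lam <= mgf_bound lam D d.
Proof.
  intros Hlam. unfold mgf_bound. rewrite <- (pow_1 (2 * lam)) at 1.
  apply Rle_pow; [lra|]. pose proof (Nat.pow_nonzero 2 (D - d)). lia.
Qed.

(* Above depth D the split probability is at most 1 / (4 lam); below it the bound is squared. *)
Lemma mgf_bound_step a lam D d : 0 <= a <= 1 -> 1 <= lam -> a ^ D * (4 * lam) <= 1 ->
  (1 - a ^ d) * lam + a ^ d * mgf_bound lam D (S d) ^ 2 <= mgf_bound lam D d.
Proof.
  intros Ha Hlam HD. pose proof (pow_le a d (proj1 Ha)). pose proof (pow_le_1 a d Ha).
  destruct (Nat.le_gt_cases D d) as [Hle | Hlt].
  - unfold mgf_bound. replace (D - d)%nat with 0%nat by lia.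
    replace (D - S d)%nat with 0%nat by lia. simpl.
    pose proof (pow_le_pow_of_le_1 a D d Ha Hle).
    assert (a ^ d * (4 * lam) * lam <= lam) by nra. nra.
  - assert (E : mgf_bound lam D d = mgf_bound lam D (S d) ^ 2).
    { unfold mgf_bound. replace (D - d)%nat with (S (D - S d)) by lia.
      rewrite Nat.pow_succ_r', Nat.mul_comm, pow_mult. reflexivity. }
    rewrite E. pose proof (mgf_bound_ge lam D (S d) Hlam).
    assert (lam <= mgf_bound lam D (S d) ^ 2) by (simpl; nra). nra.
Qed.

Lemma trunc_mgf_le_mgf_bound a lam D n d : 0 <= a <= 1 -> 1 <= lam ->
  a ^ D * (4 * lam) <= 1 -> trunc_mgf a lam d n <= mgf_bound lam D d.
Proof.
  intros Ha Hlam HD. revert d; induction n as [|m IH]; intros d.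
  - pose proof (mgf_bound_ge lam D d Hlam).
    unfold trunc_mgf, leaves_cdf, partial_expect; simpl; lra.
  - eapply Rle_trans; [apply trunc_mgf_S_le; assumption|].
    eapply Rle_trans; [|apply (mgf_bound_step a lam D d); assumption].
    apply Rplus_le_compat_l, Rmult_le_compat_l; [apply pow_le, Ha|].
    apply pow_incr. split; [apply trunc_mgf_nonneg; lra | apply IH].
Qed.

Lemma prob_K_gt_eq a k : prob_K_gt a k = 1 - leaves_cdf a 0 k.
Proof.
  unfold prob_K_gt, prob_K_le, leaves_cdf, partial_expect. f_equal.
  apply sumR_map_ext. intros j _. unfold leaves_pmf. ring.
Qed.

Lemma prob_K_gt_le_1 a k : 0 <= a <= 1 -> prob_K_gt a k <= 1.
Proof.
  intros Ha. rewrite prob_K_gt_eq.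
  pose proof (partial_expect_nonneg a 0 (fun _ => 1) k Ha ltac:(intros; lra)).
  unfold leaves_cdf. lra.
Qed.

Lemma prob_K_gt_mul_pow_le a lam D k : 0 <= a <= 1 -> 1 <= lam ->
  a ^ D * (4 * lam) <= 1 -> prob_K_gt a k * lam ^ S k <= (2 * lam) ^ (2 ^ D).
Proof.
  intros Ha Hlam HD. rewrite prob_K_gt_eq.
  pose proof (trunc_mgf_le_mgf_bound a lam D k 0 Ha Hlam HD) as Hb.
  unfold trunc_mgf, mgf_bound in Hb. rewrite Nat.sub_0_r in Hb.
  pose proof (partial_expect_nonneg a 0 (pow lam) k Ha (fun j => pow_le lam j ltac:(lra))).
  lra.
Qed.

Lemma prob_K_gt_mul_pow_le_1 a lam D k : 0 <= a <= 1 -> 2 <= lam ->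
  a ^ D * (4 * lam) <= 1 -> (2 * 2 ^ D <= S k)%nat ->
  prob_K_gt a k * lam ^ (S k - 2 * 2 ^ D) <= 1.
Proof.
  intros Ha Hlam HD Hk. set (N := (2 ^ D)%nat) in *.
  pose proof (prob_K_gt_mul_pow_le a lam D k Ha ltac:(lra) HD) as Hb. fold N in Hb.
  assert (H2 : (2 * lam) ^ N <= lam ^ (2 * N)).
  { rewrite pow_mult. apply pow_incr. simpl. nra. }
  replace (S k) with (2 * N + (S k - 2 * N))%nat in Hb at 1 by lia.
  rewrite pow_add in Hb.
  assert (0 < lam ^ (2 * N)) by (apply pow_lt; lra).
  apply (Rmult_le_reg_l (lam ^ (2 * N))); [assumption|]. nra.
Qed.

Lemma le_exp_of_mul_pow_le p lam r k : 1 <= lam -> p * lam ^ r <= 1 ->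
  (1 <= k)%nat -> (k <= 2 * r)%nat -> INR k < lam ^ 6 ->
  p <= exp (- (/ 12 * INR k * ln (INR k))).
Proof.
  intros Hlam Hp Hk Hkr Hk6.
  assert (Hk1 : 1 <= INR k) by (apply (le_INR 1); exact Hk).
  assert (Hr : INR k <= 2 * INR r) by (rewrite <- (mult_INR 2); apply le_INR, Hkr).
  assert (Hlnk : 0 <= ln (INR k)) by (rewrite <- ln_1; destruct Hk1 as [H | <-];
                                      [left; apply ln_increasing; lra | lra]).
  assert (Hln6 : ln (INR k) < 6 * ln lam).
  { replace 6 with (INR 6) by (simpl; ring). rewrite <- ln_pow by lra.
    apply ln_increasing; lra. }
  assert (Epow : lam ^ r = exp (INR r * ln lam))
    by (rewrite <- ln_pow, exp_ln; [reflexivity | apply pow_lt | ]; lra).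
  rewrite Epow in Hp.
  assert (p <= exp (- (INR r * ln lam))).
  { rewrite exp_Ropp. pose proof (exp_pos (INR r * ln lam)).
    apply (Rmult_le_reg_r (exp (INR r * ln lam))); [assumption|].
    rewrite Rinv_l by lra. lra. }
  eapply Rle_trans; [eassumption|]. apply exp_le.
  assert (INR k * ln (INR k) <= 2 * INR r * (6 * ln lam)) by (apply Rmult_le_compat; lra).
  lra.
Qed.

(* With 2^(D+2) <= k < 2^(D+3) and lam = a^-D / 4 >= 2^D / 4, one has lam^6 > k once D >= 3. *)
Lemma prob_K_gt_le_exp a k : 0 < a < 1 / 2 -> (32 <= k)%nat ->
  prob_K_gt a k <= exp (- (/ 12 * INR k * ln (INR k))).
Proof.
  intros Ha Hk.
  set (L := Nat.log2 k).
  destruct (Nat.log2_spec k) as [HkL HkL']; [lia|]. fold L in HkL, HkL'.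
  assert (HL : (5 <= L)%nat) by (apply (Nat.log2_le_mono 32) in Hk; exact Hk).
  set (D := (L - 2)%nat). set (N := (2 ^ D)%nat).
  assert (EL : (2 ^ L = 4 * N)%nat)
    by (unfold N; replace L with (2 + D)%nat at 1 by lia; apply Nat.pow_add_r).
  assert (EL' : (2 ^ S L = 8 * N)%nat) by (rewrite Nat.pow_succ_r', EL; lia).
  set (lam := / (4 * a ^ D)).
  assert (HaD : 0 < a ^ D) by (apply pow_lt; lra).
  assert (Hlam : a ^ D * (4 * lam) = 1) by (unfold lam; field; lra).
  assert (EN : INR N = 2 ^ D)
    by (unfold N; rewrite pow_INR; replace (INR 2) with 2 by (simpl; ring); reflexivity).
  assert (HN : 8 <= INR N)
    by (rewrite EN; replace 8 with (2 ^ 3) by ring; apply Rle_pow; [lra | lia]).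
  assert (HNlam : INR N <= 4 * lam).
  { pose proof (pow_le_1 (2 * a) D ltac:(lra)) as H2a. rewrite Rpow_mult_distr in H2a.
    assert (0 < lam) by (unfold lam; apply Rinv_0_lt_compat; lra).
    rewrite EN, <- (Rmult_1_r (2 ^ D)), <- Hlam.
    replace (2 ^ D * (a ^ D * (4 * lam))) with (2 ^ D * a ^ D * (4 * lam)) by ring.
    rewrite <- (Rmult_1_l (4 * lam)) at 2. apply Rmult_le_compat_r; lra. }
  assert (Hk6 : INR k < lam ^ 6).
  { assert (INR k < 8 * INR N).
    { replace (8 * INR N) with (INR (8 * N)) by (rewrite mult_INR; simpl; ring).
      rewrite <- EL'. apply lt_INR, HkL'. }
    assert (8 ^ 5 <= INR N ^ 5) by (apply pow_incr; lra).
    assert ((INR N / 4) ^ 6 <= lam ^ 6) by (apply pow_incr; split; lra).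
    simpl in *. nra. }
  apply (le_exp_of_mul_pow_le _ lam (S k - 2 * N)); [lra | | lia | lia | exact Hk6].
  apply (prob_K_gt_mul_pow_le_1 a lam D); [lra | lra | lra | lia].
Qed.

Theorem corollary2 (alpha : R) (Halpha : 0 < alpha < 1 / 2) :
  exists C CK : R, 0 < C /\ 0 < CK /\
    forall k : nat, (2 <= k)%nat ->
      prob_K_gt alpha k <= C * exp (- (CK * INR k * ln (INR k))).
Proof.
  (* For k < 32 the tail is at most 1 and k ln k / 12 < 100. *)
  exists (exp 100), (/ 12). split; [apply exp_pos | split; [lra|]].
  intros k Hk. rewrite <- exp_plus.
  destruct (Nat.lt_ge_cases k 32) as [Hsmall | Hlarge].
  - assert (Hk2 : 2 <= INR k) by (apply (le_INR 2); exact Hk).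
    assert (Hk31 : INR k <= 31)
      by (replace 31 with (INR 31) by (simpl; ring); apply le_INR; lia).
    assert (ln (INR k) <= INR k) by (pose proof (exp_ineq1_le (ln (INR k)));
                                     rewrite exp_ln in *; lra).
    assert (0 <= ln (INR k)) by (rewrite <- ln_1; left; apply ln_increasing; lra).
    eapply Rle_trans; [apply prob_K_gt_le_1; lra|].
    rewrite <- exp_0. apply exp_le. nra.
  - eapply Rle_trans; [apply prob_K_gt_le_exp; [exact Halpha | lia]|].
    apply exp_le. lra.
Qed.
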